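(* Let $\mathcal{T}$ be a collection of tests on $[n]$ that is a test cover, and let $\mathcal{T}^*$ be obtained from $\mathcal{T}$ by adding every singleton $\{i\}$, $i\in[n]$, not already in $\mathcal{T}$. Then for every positive integer $k$, $\mathcal{T}^*$ contains a $k$-mini test cover if and only if $\mathcal{T}$ contains a $k$-mini test cover.
   Context: Items are the elements of $[n]$; a test is a subset of $[n]$. A test $T$ separates $i\neq j$ if $|\{i,j\}\cap T|=1$; a subcollection is a test cover if it separates every pair of distinct items. The classes induced by $\mathcal{T}'\subseteq\mathcal{T}$ are the equivalence classes of the relation ''$i,j$ are not separated by any test of $\mathcal{T}'$''. A $k$-mini test cover of $\mathcal{T}$ is a subcollection $\mathcal{T}'\subseteq\mathcal{T}$ with $|\mathcal{T}'|\le 2k$ inducing at least $|\mathcal{T}'|+k$ classes. *)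

From mathcomp Require Import all_boot.
Set Implicit Arguments. Unset Strict Implicit. Unset Printing Implicit Defensive.

Definition separates (n : nat) (T : {set 'I_n}) (i j : 'I_n) : bool :=
  (i \in T) != (j \in T).

Definition test_cover (n : nat) (C : {set {set 'I_n}}) : Prop :=
  forall i j : 'I_n, i != j -> exists2 T, T \in C & separates T i j.

Definition unsep (n : nat) (C : {set {set 'I_n}}) (i j : 'I_n) : bool :=
  [forall T in C, ~~ separates T i j].

Definition induced_classes (n : nat) (C : {set {set 'I_n}}) : {set {set 'I_n}} :=
  [set [set j | unsep C i j] | i : 'I_n].

Definition num_classes (n : nat) (C : {set {set 'I_n}}) : nat :=
  #|induced_classes C|.

Definition mini_test_cover (n k : nat) (C C' : {set {set 'I_n}}) : Prop :=
  C' \subset C /\ #|C'| <= 2 * k /\ #|C'| + k <= num_classes C'.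

Definition has_mini_test_cover (n k : nat) (C : {set {set 'I_n}}) : Prop :=
  exists C', mini_test_cover k C C'.

Definition add_singletons (n : nat) (C : {set {set 'I_n}}) : {set {set 'I_n}} :=
  C :|: [set [set i] | i : 'I_n].

From mathcomp Require Import all_boot.
From mathcomp Require Import zify.
Set Implicit Arguments. Unset Strict Implicit.

(* A singleton test {i} refines the classes of a collection D
   only by splitting i off its class, so adding it creates at most one new
   class.  Hence adding any set S of singleton tests to a collection E
   raises the number of induced classes by at most #|S|.
   Given a k-mini test cover D of C*, split D into E := D :&: C (tests of C)
   and S := D :\: C (added singletons).  Then #|E| = #|D| - #|S| and
   num_classes D <= num_classes E + #|S|, so the "surplus"
   num_classes - #|.| does not drop and E is a k-mini test cover of C.
   The converse is immediate since C is contained in C*. *)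

Definition singleton_tests (n : nat) : {set {set 'I_n}} := [set [set i] | i : 'I_n].

Lemma unsep_setU1 (n : nat) (T : {set 'I_n}) (D : {set {set 'I_n}}) (j l : 'I_n) :
  unsep (T |: D) j l = ~~ separates T j l && unsep D j l.
Proof.
apply/forall_inP/andP => [unsepTD | [notT /forall_inP unsepD] U].
  split; first exact/unsepTD/setU11.
  by apply/forall_inP => U UD; apply/unsepTD; rewrite setU1r.
by rewrite in_setU1 => /orP[/eqP-> // | /unsepD].
Qed.

Lemma unsep_refl (n : nat) (D : {set {set 'I_n}}) (i : 'I_n) : unsep D i i.
Proof. by apply/forall_inP => U _; rewrite /separates eqxx. Qed.

(* Adding the singleton test {i} splits at most one class: every new class is
   either {i} or an old class with i removed. *)
Lemma num_classes_setU1_singleton (n : nat) (D : {set {set 'I_n}}) (i : 'I_n) :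
  num_classes ([set i] |: D) <= (num_classes D).+1.
Proof.
rewrite /num_classes.
have refine : induced_classes ([set i] |: D) \subset
              [set i] |: [set c :\ i | c in induced_classes D].
  apply/subsetP => _ /imsetP [j _ ->].
  have [-> | ji] := eqVneq j i.
    apply/setU1P; left; apply/setP => l.
    rewrite !inE unsep_setU1 /separates !inE eqxx.
    by have [-> | //] := eqVneq l i; rewrite unsep_refl.
  apply/setU1P; right; apply/imsetP; exists [set l | unsep D j l].
    exact: imset_f.
  by apply/setP => l; rewrite !inE unsep_setU1 /separates !inE (negbTE ji); case: (l == i).
apply: leq_trans (subset_leq_card refine) _.
rewrite cardsU1 -add1n leq_add ?leq_imset_card //.
by case: (_ \notin _).
Qed.

Lemma num_classes_add_singleton_tests (n : nat) (E S : {set {set 'I_n}}) :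
  S \subset singleton_tests n -> num_classes (S :|: E) <= num_classes E + #|S|.
Proof.
move=> sub; have [m cardS] := ubnP #|S|.
elim: m => // m IH in S sub cardS *.
have [-> | [x xS]] := set_0Vmem S; first by rewrite set0U cards0 addn0.
have /imsetP [i _ defx] := subsetP sub x xS; subst x.
have cardS' : #|S :\ [set i]| < m by move: cardS; rewrite (cardsD1 [set i] S) xS.
have sub' : S :\ [set i] \subset singleton_tests n.
  exact: subset_trans (subsetDl _ _) sub.
rewrite (cardsD1 [set i] S) xS -{1}(setD1K xS) -setUA.
apply: leq_trans (num_classes_setU1_singleton _ _) _.
by rewrite addnC addSn ltnS addnC; exact: IH.
Qed.

Lemma num_classes_restrict (n : nat) (C D : {set {set 'I_n}}) :
  D \subset add_singletons C ->
  num_classes D <= num_classes (D :&: C) + #|D :\: C|.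
Proof.
move=> sD; rewrite -{1}(setID D C) setUC.
apply: num_classes_add_singleton_tests; apply/subsetP => T /setDP [TD TnC].
by move: (subsetP sD T TD); rewrite /add_singletons inE (negbTE TnC).
Qed.

Theorem mainTheorem8 (n : nat) (C : {set {set 'I_n}}) (k : nat) :
  test_cover C -> 0 < k ->
  (has_mini_test_cover k (add_singletons C) <-> has_mini_test_cover k C).
Proof.
move=> _ _; split => [[D [sD [smallD manyD]]] | [D [sD miniD]]].
- have classesD := num_classes_restrict sD.
  have cardD := cardsID C D.
  exists (D :&: C); split; first exact: subsetIr.
  split; lia.
- by exists D; split => //; apply: subset_trans sD (subsetUl _ _).
Qed.
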